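(* Let $r$ be even with $r\mid n$, and let $\pi=(1,2,\dots,r)(r+1,\dots,2r)\cdots(n-r+1,\dots,n)\in S_n$, with centralizer $Z(\pi)$ in $S_n$. Then $$\sum_{w\in I_n\cap Z(\pi)}(-1)^{\mathrm{inv}_w(\pi)}=\begin{cases}0,& n/r\text{ odd},\\ \dfrac{(n/r)!}{(n/(2r))!\,2^{n/(2r)}}\,r^{n/(2r)},& n/r\text{ even}.\end{cases}$$
   Context: $I_n$ is the set of involutions (including identity) of $S_n$. For $w\in I_n$, $\mathrm{Pair}(w)$ is the set of 2-cycles of $w$ as unordered 2-subsets; $\mathrm{Inv}(\pi)=\{\{i,j\}:(j-i)(\pi(j)-\pi(i))<0\}$; $\mathrm{inv}_w(\pi)=\#(\mathrm{Inv}(\pi)\cap\mathrm{Pair}(w))$. *)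

(* Points {1..n} are represented 0-based as 'I_n. *)
From HB Require Import structures.
From mathcomp Require Import all_boot all_order all_fingroup all_algebra.
Set Implicit Arguments. Unset Strict Implicit. Unset Printing Implicit Defensive.

Definition involution n (w : 'S_n) : bool := (w * w == 1)%g.

Definition in_centralizer n (p w : 'S_n) : bool := (w * p == p * w)%g.

Definition Pair n (w : 'S_n) : {set {set 'I_n}} :=
  [set [set i; w i] | i in [set i : 'I_n | w i != i]].

(* Inv(p) = {{i,j} : (j - i)(p j - p i) < 0}, i.e. pairs i < j with p j < p i *)
Definition Inv n (p : 'S_n) : {set {set 'I_n}} :=
  [set A : {set 'I_n} | [exists i : 'I_n, exists j : 'I_n,
     [&& A == [set i; j], (nat_of_ord i < nat_of_ord j)%N
       & (nat_of_ord (p j) < nat_of_ord (p i))%N]]].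

Definition invw n (w p : 'S_n) : nat := #|Inv p :&: Pair w|.

From HB Require Import structures.
From mathcomp Require Import all_boot all_order all_fingroup all_algebra.
From mathcomp Require Import zify.
Import GRing.Theory.
Set Implicit Arguments. Unset Strict Implicit. Unset Printing Implicit Defensive.

(* The points 0..n-1 fall into n/r blocks of r consecutive points, on each of
   which p is a rotation.  Since p only inverts the pairs {i, j} inside one
   block with j the last point of the block, for an involution w the number
   inv_w(p) counts the blocks whose last point w moves inside its own block.

   For a union U of blocks let Z(U) be the signed sum over the involutions
   commuting with p and supported on U.  Fix x0 in U and split the sum
   according to w x0.  Such a w is determined on the blocks of x0 and w x0 by
   w x0 alone, so each class is a translate t * w' of the involutions w'
   supported off these blocks, with sign multiplied by that of t.  Inside the
   block of x0, w x0 is x0 (t = 1) or its antipode (t = half-turn, sign -1),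
   and these two classes cancel; for w x0 = y in another block t is the swap
   of the two blocks, with sign 1.  Hence Z on k blocks is (k-1) r times Z on
   k-2 blocks, and solving this recursion yields the closed form. *)

Section BlockRotation.
Variables (n r : nat) (p : 'S_n).
Hypothesis r_gt0 : 0 < r.
Hypothesis p_def : forall i : 'I_n, val (p i) = (i %/ r) * r + (i %% r).+1 %% r.

Local Notation blk x := (nat_of_ord x %/ r).
Local Notation pos x := (nat_of_ord x %% r).
Local Notation rot k := (p ^+ k)%g.

Lemma eq_blk_pos (x y : 'I_n) : blk x = blk y -> pos x = pos y -> x = y.
Proof. by move=> eb ep; apply: val_inj; rewrite /= (divn_eq x r) (divn_eq y r) eb ep. Qed.

Lemma pos_lt (x : 'I_n) : pos x < r.
Proof. exact: ltn_pmod. Qed.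

Lemma rotE k (x : 'I_n) : val (rot k x) = blk x * r + (pos x + k) %% r.
Proof.
elim: k => [|k IH]; first by rewrite expg0 perm1 addn0 modn_mod -divn_eq.
rewrite expgSr permM p_def IH divnMDl // (divn_small (ltn_pmod _ r_gt0)) addn0.
by rewrite modnMDl modn_mod -addn1 modnDml -addnA addn1.
Qed.

Lemma blk_rot k (x : 'I_n) : blk (rot k x) = blk x.
Proof. by rewrite rotE divnMDl // (divn_small (ltn_pmod _ r_gt0)) addn0. Qed.

Lemma pos_rot k (x : 'I_n) : pos (rot k x) = (pos x + k) %% r.
Proof. by rewrite rotE modnMDl modn_mod. Qed.

Lemma rot_mod k1 k2 (x : 'I_n) : k1 = k2 %[mod r] -> rot k1 x = rot k2 x.
Proof.
move=> ek; apply: eq_blk_pos; rewrite ?blk_rot // !pos_rot.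
by rewrite -modnDmr ek modnDmr.
Qed.

Lemma rotD i j (x : 'I_n) : rot i (rot j x) = rot (j + i) x.
Proof. by rewrite expgD permM. Qed.

(* offset a x : the number of steps of p leading from a to x (modulo r). *)
Definition offset (a x : 'I_n) : nat := pos x + r - pos a.

Lemma offsetK (a x : 'I_n) : offset a x + pos a = pos x + r.
Proof. by rewrite subnK // (leq_trans (ltnW (pos_lt a))) ?leq_addl. Qed.

Lemma rot_offset (a x : 'I_n) : blk a = blk x -> rot (offset a x) a = x.
Proof.
move=> eb; apply: eq_blk_pos; rewrite ?blk_rot // pos_rot.
by rewrite addnC offsetK modnDr modn_mod.
Qed.

Lemma offset_rot k (b : 'I_n) : offset b (rot k b) = k %[mod r].
Proof.
apply/eqP; rewrite -(eqn_modDr (pos b)) offsetK pos_rot modnDr modn_mod.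
by rewrite addnC.
Qed.

Lemma offset_p (a x : 'I_n) : offset a (p x) = (offset a x).+1 %[mod r].
Proof.
apply/eqP; rewrite -(eqn_modDr (pos a)) offsetK addSn offsetK.
by rewrite -{1}(expg1 p) pos_rot modnDr modn_mod addn1 -addSn modnDr.
Qed.

Lemma rot_period (x : 'I_n) : rot r x = x.
Proof. by rewrite (@rot_mod r 0) ?expg0 ?perm1 // modnn mod0n. Qed.

Lemma rot_p k (x : 'I_n) : rot k (p x) = p (rot k x).
Proof. by rewrite -!permM -expgS expgSr. Qed.

Lemma rot_offset_rot k (a b : 'I_n) : rot (offset b (rot k b)) a = rot k a.
Proof. exact/rot_mod/offset_rot. Qed.

Lemma rot_offset_p (a b x : 'I_n) : rot (offset a (p x)) b = p (rot (offset a x) b).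
Proof. by rewrite -permM -expgSr; apply/rot_mod/offset_p. Qed.

Lemma blk_p (x : 'I_n) : blk (p x) = blk x.
Proof. by have := blk_rot 1 x; rewrite expg1. Qed.

Definition Blk (x : 'I_n) : {set 'I_n} := [set y | blk y == blk x].

Lemma Blk_rot k (x : 'I_n) : Blk (rot k x) = Blk x.
Proof. by apply/setP => y; rewrite !inE blk_rot. Qed.

Lemma card_Blk (x : 'I_n) : #|Blk x| = r.
Proof.
have -> : Blk x = [set rot (val j) x | j : 'I_r].
  apply/setP => y; rewrite inE; apply/eqP/imsetP => [eb|[j _ ->]]; last first.
    by rewrite blk_rot.
  exists (Ordinal (ltn_pmod (offset x y) r_gt0)) => //=.
  by rewrite -{1}(rot_offset (esym eb)); apply: rot_mod; rewrite modn_mod.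
rewrite card_imset ?card_ord // => i j /(congr1 (fun z : 'I_n => pos z)).
rewrite !pos_rot => /eqP; rewrite eqn_modDl !modn_small ?ltn_ord // => /eqP eij.
exact: val_inj.
Qed.

Lemma involutionP (w : 'S_n) : reflect (forall x, w (w x) = x) (involution w).
Proof.
apply: (iffP eqP) => [ww x|wK]; first by rewrite -permM ww perm1.
by apply/permP => x; rewrite permM perm1.
Qed.

(* The pairs inverted by p: i < j is inverted exactly when i and j share a block
   and j is the last point of that block (which p sends back to the first). *)
Lemma inv_pair (i j : 'I_n) : i < j ->
  (p j < p i) = (blk i == blk j) && (pos j == r.-1).
Proof.
move=> ij; rewrite !p_def.
have le_blk : blk i <= blk j by apply/leq_div2r/ltnW.
case: (ltngtP (blk i) (blk j)) le_blk => [lt_blk _|//|eq_blk _]; last first.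
  have lt_pos : pos i < pos j.
    by move: ij; rewrite {1}(divn_eq i r) {1}(divn_eq j r) eq_blk ltn_add2l.
  rewrite eq_blk ltn_add2l (@modn_small (pos i).+1) ?(leq_ltn_trans lt_pos (pos_lt j)) //=.
  case: (ltngtP (pos j).+1 r) (pos_lt j) => [lt_r _|//|top _]; last first.
    move/eqP: top; rewrite -(prednK r_gt0) eqSS => /eqP ->.
    by rewrite prednK // modnn eqxx.
  rewrite modn_small // ltnS ltnNge (ltnW lt_pos); apply/esym/eqP => top.
  by move: lt_r; rewrite top prednK // ltnn.
rewrite /= ltnNge ltnW //; apply: (@leq_trans ((blk i).+1 * r)).
  by rewrite mulSn addnC ltn_add2r ltn_pmod.
exact: leq_trans (leq_mul _ _) (leq_addr _ _).
Qed.

(* The last points of the blocks that w moves inside their own block; for an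
   involution w these index the 2-cycles of w inverted by p. *)
Definition top_moved (w : 'S_n) : {set 'I_n} :=
  [set j | [&& pos j == r.-1, w j != j & blk (w j) == blk j]].

Lemma Pair_mem (w : 'S_n) (A : {set 'I_n}) (b : 'I_n) :
  involution w -> A \in Pair w -> b \in A -> w b != b /\ A = [set b; w b].
Proof.
move=> /involutionP wK /imsetP[i]; rewrite inE => wi ->.
rewrite !inE => /orP[] /eqP ->; first by [].
by rewrite wK setUC eq_sym.
Qed.

Lemma Inv_Pair (w : 'S_n) : involution w ->
  Inv p :&: Pair w = [set [set j; w j] | j in top_moved w].
Proof.
move=> w_inv; have wK := involutionP _ w_inv.
apply/setP => A; rewrite inE; apply/andP/imsetP => [[]|[j]].
  rewrite inE => /existsP[a /existsP[b /and3P[/eqP EA ab]]].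
  rewrite inv_pair // => /andP[/eqP ab_blk /eqP b_top] AP.
  have bA : b \in A by rewrite EA !inE eqxx orbT.
  have [wb EA'] := Pair_mem w_inv AP bA.
  have wba : w b = a.
    have : w b \in A by rewrite EA' !inE eqxx orbT.
    by rewrite EA !inE (negbTE wb) orbF => /eqP.
  exists b; last exact: EA'.
  by rewrite inE b_top wb wba ab_blk !eqxx.
rewrite inE => /and3P[/eqP j_top wj /eqP wj_blk] ->.
have wj_lt : w j < j.
  have : pos (w j) < pos j.
    rewrite j_top ltn_neqAle -ltnS prednK // pos_lt andbT -j_top.
    by apply: contra wj => /eqP /(eq_blk_pos wj_blk) ->.
  by move=> lt; rewrite (divn_eq (w j) r) (divn_eq j r) wj_blk ltn_add2l.
split; last by apply/imsetP; exists j; rewrite // inE.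
rewrite inE; apply/existsP; exists (w j); apply/existsP; exists j.
by rewrite setUC eqxx wj_lt inv_pair // wj_blk j_top !eqxx.
Qed.

Lemma invw_top_moved (w : 'S_n) : involution w -> invw w p = #|top_moved w|.
Proof.
move=> w_inv; rewrite /invw Inv_Pair // card_in_imset // => j1 j2.
rewrite !inE => /and3P[/eqP top1 _ _] /and3P[/eqP top2 _ /eqP blk2] E.
have : j1 \in [set j2; w j2] by rewrite -E !inE eqxx.
rewrite !inE => /orP[/eqP //| /eqP e1].
by apply: eq_blk_pos; rewrite ?top1 ?top2 // e1 blk2.
Qed.

Definition commp (w : 'S_n) : Prop := forall x, w (p x) = p (w x).

Lemma commpP (w : 'S_n) : reflect (commp w) (in_centralizer p w).
Proof.
apply: (iffP eqP) => [wp x|wc]; first by rewrite -!permM wp.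
by apply/permP => x; rewrite !permM wc.
Qed.

Lemma commp_rot (w : 'S_n) k (x : 'I_n) : commp w -> w (rot k x) = rot k (w x).
Proof.
move=> wc; elim: k => [|k IH]; first by rewrite expg0 !perm1.
by rewrite expgSr !permM wc IH.
Qed.

Lemma commp_agree (w t : 'S_n) (x y : 'I_n) :
  commp w -> commp t -> w x = t x -> y \in Blk x -> w y = t y.
Proof.
move=> wc tc wtx; rewrite inE => /eqP eb.
by rewrite -(rot_offset (esym eb)) !commp_rot // wtx.
Qed.

Definition block_closed (U : {set 'I_n}) : Prop :=
  forall x y : 'I_n, blk x = blk y -> (x \in U) = (y \in U).

Lemma block_closed_Blk (x : 'I_n) : block_closed (Blk x).
Proof. by move=> a b eb; rewrite !inE eb. Qed.

Lemma block_closedU (A B : {set 'I_n}) :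
  block_closed A -> block_closed B -> block_closed (A :|: B).
Proof. by move=> cA cB a b eb; rewrite !inE (cA _ _ eb) (cB _ _ eb). Qed.

Lemma block_closedD (A B : {set 'I_n}) :
  block_closed A -> block_closed B -> block_closed (A :\: B).
Proof. by move=> cA cB a b eb; rewrite !inE (cA _ _ eb) (cB _ _ eb). Qed.

Lemma Blk_sub (U : {set 'I_n}) (x : 'I_n) : block_closed U -> x \in U -> Blk x \subset U.
Proof. by move=> cU xU; apply/subsetP => y; rewrite inE => /eqP eb; rewrite (cU _ _ eb). Qed.

Definition fixes (V : {set 'I_n}) (w : 'S_n) : bool := [forall x in V, w x == x].

Lemma fixesP (V : {set 'I_n}) (w : 'S_n) : reflect (forall x, x \in V -> w x = x) (fixes V w).
Proof. by apply: (iffP forall_inP) => wV x /wV /eqP. Qed.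

Lemma fixesU (A B : {set 'I_n}) (w : 'S_n) : fixes (A :|: B) w = fixes A w && fixes B w.
Proof.
apply/fixesP/andP => [wAB|[/fixesP wA /fixesP wB]].
  by split; apply/fixesP => x xA; apply: wAB; rewrite inE xA ?orbT.
by move=> x; rewrite inE => /orP[/wA|/wB].
Qed.

Definition admissible (U : {set 'I_n}) (w : 'S_n) : bool :=
  [&& involution w, in_centralizer p w & fixes (~: U) w].

Lemma admissibleP (U : {set 'I_n}) (w : 'S_n) :
  reflect [/\ forall x, w (w x) = x, commp w & forall x, x \notin U -> w x = x]
          (admissible U w).
Proof.
apply: (iffP and3P) => [[/involutionP wK /commpP wc /fixesP wU]|[wK wc wU]].
  by split=> // x xU; apply: wU; rewrite inE.
split; [exact/involutionP | exact/commpP | apply/fixesP => x; rewrite inE; exact: wU].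
Qed.

Lemma admissibleT (w : 'S_n) : admissible setT w = involution w && in_centralizer p w.
Proof.
have fix0 : fixes set0 w by apply/fixesP => x; rewrite inE.
by rewrite /admissible setCT fix0 andbT.
Qed.

Lemma admissible_stable (V : {set 'I_n}) (t : 'S_n) (x : 'I_n) :
  admissible V t -> (t x \in V) = (x \in V).
Proof.
case/admissibleP => tK _ tV; apply/idP/idP; apply: contraLR => xV.
  by rewrite tV.
by rewrite -(tK x) tV.
Qed.

Definition sgn (w : 'S_n) : int := ((-1) ^+ invw w p)%R.

Definition Zsum (U : {set 'I_n}) : int := (\sum_(w | admissible U w) sgn w)%R.

Section Translate.
Variables (U V : {set 'I_n}) (t : 'S_n).
Hypothesis t_adm : admissible V t.
Hypothesis VU : V \subset U.

Lemma translate_commute (w : 'S_n) : fixes V w -> (t * w = w * t)%g.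
Proof.
move=> /fixesP wV; have /admissibleP[_ _ tV] := t_adm.
apply/permP => x; rewrite !permM; have [xV|xV] := boolP (x \in V).
  by rewrite wV ?(admissible_stable _ t_adm) // wV.
have wxV : w x \notin V by apply: contra xV => /[dup] /wV /perm_inj ->.
by rewrite !tV.
Qed.

Lemma involution_translate (w : 'S_n) : fixes V w -> involution (t * w) = involution w.
Proof.
move=> wV; have /and3P[/eqP tt _ _] := t_adm.
by rewrite /involution mulgA -(mulgA t) -translate_commute // mulgA tt mul1g.
Qed.

Lemma admissible_translate (w : 'S_n) :
  admissible U (t * w) && fixes V w = admissible (U :\: V) w.
Proof.
have /and3P[_ /eqP tp /fixesP tV] := t_adm.
have VUV : V \subset ~: (U :\: V) by rewrite setCD subsetUr.
case wV: (fixes V w); last first.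
  rewrite andbF; apply/esym/negbTE; apply: contraFN wV => /and3P[_ _ /fixesP wUV].
  by apply/fixesP => x /(subsetP VUV) /wUV.
rewrite andbT /admissible involution_translate //; congr [&& _, _ & _].
  by rewrite /in_centralizer mulgA -tp -!mulgA (inj_eq (mulgI t)).
rewrite setCD fixesU wV andbT; apply: eq_forallb_in => x; rewrite inE => xU.
by rewrite permM tV // inE; apply: contra xU; apply: (subsetP VU).
Qed.

Lemma invw_translate (w : 'S_n) :
  fixes V w -> involution w -> invw (t * w) p = invw t p + invw w p.
Proof.
move=> wV w_inv; have /admissibleP[_ _ tV] := t_adm; move/fixesP: wV => wV.
have t_inv : involution t by case/and3P: t_adm.
rewrite !invw_top_moved ?involution_translate //; last exact/fixesP.
rewrite -(cardsID V (top_moved (t * w))); congr (_ + _); apply: eq_card => j;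
  rewrite !inE permM; have [jV|jV] /= := boolP (j \in V).
- by rewrite andbT wV // (admissible_stable _ t_adm).
- by rewrite tV // eqxx !andbF.
- by rewrite wV // eqxx !andbF.
- by rewrite tV.
Qed.

Lemma sum_translate (R : zmodType) (F : 'S_n -> R) :
  (\sum_(w | admissible U w && fixes V (t * w)) F w
   = \sum_(w | admissible (U :\: V) w) F (t * w)%g)%R.
Proof.
have /and3P[/eqP tt _ _] := t_adm.
rewrite (reindex_inj (mulgI t)); apply: eq_bigl => w.
by rewrite mulgA tt mul1g admissible_translate.
Qed.

Lemma signed_translate :
  (\sum_(w | admissible U w && fixes V (t * w)) sgn w = sgn t * Zsum (U :\: V))%R.
Proof.
rewrite sum_translate /Zsum mulr_sumr; apply: eq_bigr => w.
case/and3P=> w_inv _ /fixesP wUV.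
rewrite /sgn invw_translate ?exprD //.
by apply/fixesP => x xV; apply: wUV; rewrite setCD inE xV orbT.
Qed.

End Translate.

Lemma pin_fixes (U : {set 'I_n}) (x0 : 'I_n) (t w : 'S_n) :
  admissible (Blk x0 :|: Blk (t x0)) t -> admissible U w ->
  (w x0 == t x0) = fixes (Blk x0 :|: Blk (t x0)) (t * w).
Proof.
move=> t_adm /admissibleP[wK wc _]; have /admissibleP[tK tc _] := t_adm.
apply/eqP/fixesP => [wx0 y yV|twV].
  have wt : forall z, z \in Blk x0 :|: Blk (t x0) -> w z = t z.
    move=> z; rewrite inE => /orP[]; first exact: commp_agree.
    by move=> zB; apply: (commp_agree wc tc _ zB); rewrite tK -wx0 wK.
  by rewrite permM wt ?tK // (admissible_stable _ t_adm).
have := twV x0; rewrite permM !inE eqxx => /(_ isT) e.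
by rewrite -{1}e wK.
Qed.

Lemma sum_pinned (U : {set 'I_n}) (x0 : 'I_n) (t : 'S_n) :
  block_closed U -> x0 \in U -> t x0 \in U -> admissible (Blk x0 :|: Blk (t x0)) t ->
  (\sum_(w | admissible U w && (w x0 == t x0)) sgn w
   = sgn t * Zsum (U :\: (Blk x0 :|: Blk (t x0))))%R.
Proof.
move=> cU x0U tx0U t_adm; rewrite -signed_translate //; last by rewrite subUset !Blk_sub.
apply: eq_bigl => w; have [w_adm|] //= := boolP (admissible U w).
exact: pin_fixes t_adm w_adm.
Qed.

Lemma admissible1 (V : {set 'I_n}) : admissible V 1.
Proof. by apply/admissibleP; split=> [x|x|x _]; rewrite !perm1. Qed.

Lemma sgn1 : sgn 1 = 1%R.
Proof.
rewrite /sgn invw_top_moved; last by apply/involutionP => x; rewrite !perm1.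
by rewrite (eq_card0 (_ : top_moved 1 =i pred0)) // => j; rewrite inE perm1 eqxx andbF.
Qed.

Lemma Zsum0 : Zsum set0 = 1%R.
Proof.
rewrite /Zsum (big_pred1 (1%g : 'S_n)) ?sgn1 // => w /=; apply/idP/eqP => [|->]; last exact: admissible1.
by case/admissibleP => _ _ w1; apply/permP => x; rewrite perm1 w1 ?inE.
Qed.

Lemma card_setD_Blk (U : {set 'I_n}) (x : 'I_n) :
  block_closed U -> x \in U -> #|U :\: Blk x| = #|U| - r.
Proof. by move=> cU xU; rewrite cardsD (setIidPr (Blk_sub cU xU)) card_Blk. Qed.

(* The involution exchanging two distinct blocks, matching rot k x0 with rot k y;
   it is admissible and inverts no pair of p. *)
Section Swap.
Variables (x0 y : 'I_n).
Hypothesis xy_blk : blk y != blk x0.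

Definition swap_fun (x : 'I_n) : 'I_n :=
  if blk x == blk x0 then rot (offset x0 x) y
  else if blk x == blk y then rot (offset y x) x0 else x.

Lemma swap_fun0 (x : 'I_n) : blk x = blk x0 -> swap_fun x = rot (offset x0 x) y.
Proof. by rewrite /swap_fun => ->; rewrite eqxx. Qed.

Lemma swap_fun1 (x : 'I_n) : blk x = blk y -> swap_fun x = rot (offset y x) x0.
Proof. by rewrite /swap_fun => ->; rewrite (negbTE xy_blk) eqxx. Qed.

Lemma swap_fun_out (x : 'I_n) : blk x != blk x0 -> blk x != blk y -> swap_fun x = x.
Proof. by rewrite /swap_fun => /negbTE -> /negbTE ->. Qed.

Lemma swap_funK : involutive swap_fun.
Proof.
move=> x; have [/eqP bx0|nx0] := boolP (blk x == blk x0).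
  by rewrite (swap_fun0 bx0) swap_fun1 ?blk_rot // rot_offset_rot rot_offset.
have [/eqP bxy|nxy] := boolP (blk x == blk y); last by rewrite !(swap_fun_out nx0 nxy).
by rewrite (swap_fun1 bxy) swap_fun0 ?blk_rot // rot_offset_rot rot_offset.
Qed.

Definition swap : 'S_n := perm (can_inj swap_funK).

Lemma swapE (x : 'I_n) : swap x = swap_fun x.
Proof. by rewrite permE. Qed.

Lemma swap_x0 : swap x0 = y.
Proof. by rewrite swapE swap_fun0 // /offset addKn rot_period. Qed.

Lemma swap_admissible : admissible (Blk x0 :|: Blk (swap x0)) swap.
Proof.
rewrite swap_x0; apply/admissibleP; split => [x|x|x].
- by rewrite !swapE swap_funK.
- rewrite !swapE; have [/eqP bx0|nx0] := boolP (blk x == blk x0).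
    by rewrite !swap_fun0 ?blk_p // rot_offset_p.
  have [/eqP bxy|nxy] := boolP (blk x == blk y); last by rewrite !swap_fun_out ?blk_p.
  by rewrite !swap_fun1 ?blk_p // rot_offset_p.
by rewrite !inE negb_or => /andP[nx0 nxy]; rewrite swapE swap_fun_out.
Qed.

Lemma sgn_swap : sgn swap = 1%R.
Proof.
have /and3P[swap_inv _ _] := swap_admissible.
rewrite /sgn invw_top_moved // (eq_card0 (_ : top_moved swap =i pred0)) // => j.
rewrite inE swapE; have [/eqP bx0|nx0] := boolP (blk j == blk x0).
  by rewrite swap_fun0 // blk_rot bx0 (negbTE xy_blk) !andbF.
have [/eqP bxy|nxy] := boolP (blk j == blk y); last by rewrite swap_fun_out // eqxx andbF.
by rewrite swap_fun1 // blk_rot bxy (eq_sym (blk x0)) (negbTE xy_blk) !andbF.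
Qed.

End Swap.

(* For even r, the half-turn of the block of x0 is an admissible involution
   whose only inverted 2-cycle contains the last point of that block. *)
Section HalfTurn.
Hypothesis r_even : ~~ odd r.
Local Notation h := r./2.

Lemma half_add : h + h = r.
Proof. by rewrite addnn -[RHS](odd_double_half r) (negbTE r_even). Qed.

Lemma half_gt0 : 0 < h.
Proof. by rewrite lt0n; apply: contraTneq r_gt0 => h0; rewrite -half_add h0. Qed.

Lemma half_lt : h < r.
Proof. by rewrite -{2}half_add -addn1 leq_add2l half_gt0. Qed.

Lemma rot_half_twice (x : 'I_n) : rot h (rot h x) = x.
Proof. by rewrite rotD half_add rot_period. Qed.

Lemma rot_half_neq (x : 'I_n) : rot h x != x.
Proof.
apply: contraTneq half_gt0 => /(congr1 (fun z : 'I_n => pos z)).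
rewrite pos_rot -{2}(modn_small (pos_lt x)) -{2}[pos x]addn0 => /eqP.
by rewrite eqn_modDl mod0n modn_small ?half_lt // => /eqP ->.
Qed.

Lemma within_block (U : {set 'I_n}) (w : 'S_n) (x0 : 'I_n) :
  admissible U w -> w x0 \in Blk x0 -> w x0 = x0 \/ w x0 = rot h x0.
Proof.
case/admissibleP => wK wc _; rewrite inE => /eqP eb.
set c := offset x0 (w x0); have wx0 : w x0 = rot c x0 by rewrite rot_offset.
have cc : (c + c) %% r = 0.
  have : rot (c + c) x0 = x0 by rewrite -rotD -wx0 -commp_rot // -wx0 wK.
  move/(congr1 (fun z : 'I_n => pos z)); rewrite pos_rot => /eqP.
  by rewrite -{2}(modn_small (pos_lt x0)) -{2}[pos x0]addn0 eqn_modDl mod0n => /eqP.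
have h_dvd : h %| c.
  by rewrite -(dvdn_pmul2r (isT : 0 < 2)) !muln2 -!addnn half_add /dvdn cc.
have cE : c %% r = odd (c %/ h) * h.
  by rewrite -{1}(divnK h_dvd) -[X in _ %% X]half_add addnn -mul2n -muln_modl modn2.
rewrite wx0 (@rot_mod c (c %% r)) ?modn_mod // cE.
by case: (odd _); [right; rewrite mul1n | left; rewrite mul0n expg0 perm1].
Qed.

Section At.
Variable x0 : 'I_n.

Definition halfturn_fun (x : 'I_n) : 'I_n := if blk x == blk x0 then rot h x else x.

Lemma halfturn_funK : involutive halfturn_fun.
Proof.
move=> x; rewrite {2}/halfturn_fun; case: ifP => bx.
  by rewrite /halfturn_fun blk_rot bx rot_half_twice.
by rewrite /halfturn_fun bx.
Qed.

Definition halfturn : 'S_n := perm (can_inj halfturn_funK).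

Lemma halfturnE (x : 'I_n) : halfturn x = halfturn_fun x.
Proof. by rewrite permE. Qed.

Lemma halfturn_x0 : halfturn x0 = rot h x0.
Proof. by rewrite halfturnE /halfturn_fun eqxx. Qed.

Lemma halfturn_admissible : admissible (Blk x0 :|: Blk (halfturn x0)) halfturn.
Proof.
rewrite halfturn_x0 Blk_rot setUid; apply/admissibleP; split => [x|x|x].
- by rewrite !halfturnE halfturn_funK.
- by rewrite !halfturnE /halfturn_fun blk_p; case: ifP; rewrite ?rot_p.
by rewrite inE halfturnE /halfturn_fun => /negbTE ->.
Qed.

Lemma sgn_halfturn : sgn halfturn = (-1)%R.
Proof.
have /and3P[ht_inv _ _] := halfturn_admissible.
set top := rot (r.-1 + r - pos x0) x0.
have top_pos : pos top = r.-1.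
  rewrite pos_rot subnKC; first by rewrite modnDr modn_small ?ltn_predL.
  exact: leq_trans (ltnW (pos_lt x0)) (leq_addl _ _).
suff top_E : top_moved halfturn = [set top] by rewrite /sgn invw_top_moved // top_E cards1.
apply/setP => j; rewrite !inE halfturnE /halfturn_fun.
have [bj|bj] := eqVneq (blk j) (blk x0); last first.
  by rewrite eqxx andbF; apply/esym; apply: contraNF bj => /eqP ->; rewrite blk_rot.
rewrite blk_rot eqxx rot_half_neq !andbT; apply/eqP/eqP => [j_top|->//].
by apply: eq_blk_pos; rewrite ?blk_rot ?bj ?j_top.
Qed.

End At.

Lemma sum_pinned_fixed (U : {set 'I_n}) (x0 : 'I_n) : block_closed U -> x0 \in U ->
  (\sum_(w | admissible U w && (w x0 == x0)) sgn w = Zsum (U :\: Blk x0))%R.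
Proof.
move=> cU x0U; have := sum_pinned cU x0U _ (admissible1 _); rewrite !perm1 setUid.
by rewrite sgn1 mul1r; apply.
Qed.

Lemma sum_pinned_antipode (U : {set 'I_n}) (x0 : 'I_n) : block_closed U -> x0 \in U ->
  (\sum_(w | admissible U w && (w x0 == rot h x0)) sgn w = - Zsum (U :\: Blk x0))%R.
Proof.
move=> cU x0U; have := sum_pinned cU x0U _ (halfturn_admissible x0).
rewrite halfturn_x0 Blk_rot setUid sgn_halfturn mulN1r; apply.
by rewrite (cU _ x0) ?blk_rot.
Qed.

(* Since w x0 can only be x0 or its antipode inside the block of x0, the
   contributions of that block cancel. *)
Lemma sum_in_block (U : {set 'I_n}) (x0 : 'I_n) : block_closed U -> x0 \in U ->
  (\sum_(y | (y \in U) && (y \in Blk x0)) \sum_(w | admissible U w && (w x0 == y)) sgn w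
   = 0)%R.
Proof.
move=> cU x0U; have ant_U : rot h x0 \in U by rewrite (cU _ x0) ?blk_rot.
rewrite (bigD1 x0) ?x0U ?inE ?eqxx //= (bigD1 (rot h x0)) /=; last first.
  by rewrite ant_U inE blk_rot eqxx rot_half_neq.
have others : (\sum_(y | (y \in U) && (y \in Blk x0) && (y != x0) && (y != rot h x0))
                 \sum_(w | admissible U w && (w x0 == y)) sgn w = 0)%R.
  apply: big1 => y /andP[/andP[/andP[_ yB] ny0] nyh]; apply: big_pred0 => w.
  apply/negP => /andP[w_adm /eqP wy]; rewrite -wy in yB ny0 nyh.
  by case: (within_block w_adm yB) => e; [move: ny0 | move: nyh]; rewrite e eqxx.
by rewrite others addr0 sum_pinned_fixed // sum_pinned_antipode // addrN.
Qed.

Lemma Zsum_rec (U : {set 'I_n}) (x0 : 'I_n) : block_closed U -> x0 \in U ->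
  Zsum U = (\sum_(y in U :\: Blk x0) Zsum (U :\: (Blk x0 :|: Blk y)))%R.
Proof.
move=> cU x0U; rewrite /Zsum (partition_big (fun w : 'S_n => w x0) (mem U)) /=; last first.
  by move=> w w_adm; rewrite (admissible_stable _ w_adm).
rewrite (bigID (mem (Blk x0))) /= sum_in_block // add0r.
apply: eq_big => [y|y]; first by rewrite in_setD andbC.
move=> /andP[yU yB]; have xy : blk y != blk x0 by rewrite inE in yB.
rewrite -{1}(swap_x0 xy) sum_pinned ?swap_x0 ?sgn_swap ?mul1r //.
by have := swap_admissible xy; rewrite swap_x0.
Qed.

Fixpoint pairing_sum (k : nat) : nat :=
  match k with 0 => 1 | 1 => 0 | k'.+2 => k'.+1 * r * pairing_sum k' end.

Lemma pairing_sumS (k : nat) : pairing_sum k.+1 = k * r * pairing_sum k.-1.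
Proof. by case: k. Qed.

Lemma Zsum_blocks (k : nat) (U : {set 'I_n}) :
  block_closed U -> #|U| = k * r -> Zsum U = Posz (pairing_sum k).
Proof.
elim/ltn_ind: k U => -[|k] IH U cU cardU.
  by move: cardU; rewrite mul0n => /cards0_eq ->; rewrite Zsum0.
have /set0Pn[x0 x0U] : U != set0 by rewrite -card_gt0 cardU muln_gt0 r_gt0.
rewrite (Zsum_rec cU x0U) (eq_bigr (fun=> Posz (pairing_sum k.-1))); last first.
  move=> y; rewrite in_setD inE => /andP[xy yU].
  apply: IH; first by rewrite ltnS leq_pred.
    by apply: block_closedD => //; apply: block_closedU; apply: block_closed_Blk.
  have cUx : block_closed (U :\: Blk x0) by apply/block_closedD/block_closed_Blk.
  rewrite -setDDl card_setD_Blk ?in_setD ?inE ?xy // card_setD_Blk // cardU.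
  by rewrite mulSn addKn -{2}(mul1n r) -mulnBl subn1.
rewrite sumr_const card_setD_Blk // cardU mulSn addKn.
by rewrite pairing_sumS -mulr_natr -!natz -natrM mulnC.
Qed.

End HalfTurn.

End BlockRotation.

Fixpoint odd_fact (m : nat) : nat := if m is m'.+1 then m'.*2.+1 * odd_fact m' else 1.

Lemma fact_double (m : nat) : (m.*2)`! = m`! * 2 ^ m * odd_fact m.
Proof. by elim: m => [|m IH] //=; rewrite doubleS !factS IH expnS; nia. Qed.

Lemma pairing_sumSS (r k : nat) : pairing_sum r k.+2 = k.+1 * r * pairing_sum r k.
Proof. by []. Qed.

Lemma pairing_sum_even (r m : nat) : pairing_sum r m.*2 = odd_fact m * r ^ m.
Proof. by elim: m => [|m IH] //; rewrite doubleS pairing_sumSS IH expnS /=; nia. Qed.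

Lemma pairing_sum_odd (r m : nat) : pairing_sum r m.*2.+1 = 0.
Proof. by elim: m => [|m IH] //; rewrite doubleS pairing_sumSS IH muln0. Qed.

Lemma pairing_sumE (r k : nat) : pairing_sum r k =
  if odd k then 0 else k`! %/ ((k./2)`! * 2 ^ k./2) * r ^ k./2.
Proof.
rewrite -{1 3}(odd_double_half k); case: (odd k); first exact: pairing_sum_odd.
by rewrite pairing_sum_even fact_double mulKn // muln_gt0 fact_gt0 expn_gt0.
Qed.

Local Open Scope ring_scope.

Theorem lemma3p4 (n r : nat) (p : 'S_n) :
  (0 < r)%N -> ~~ odd r -> (r %| n)%N ->
  (* p = (1,...,r)(r+1,...,2r)...(n-r+1,...,n), written 0-based *)
  (forall i : 'I_n, val (p i) = (i %/ r) * r + (i %% r).+1 %% r)%N ->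
  \sum_(w : 'S_n | involution w && in_centralizer p w) (-1 : int) ^+ invw w p
  = (if odd (n %/ r) then 0
     else (((n %/ r)`! %/ ((n %/ (2 * r))`! * 2 ^ (n %/ (2 * r))))
           * r ^ (n %/ (2 * r)))%N%:Z).
Proof.
move=> r_gt0 r_even r_dvd p_def.
have all_blocks : Zsum p setT = Posz (pairing_sum r (n %/ r)).
  apply: Zsum_blocks => //; last by rewrite cardsT card_ord divnK.
  by move=> x y _; rewrite !in_setT.
transitivity (Zsum p setT); first by apply: eq_bigl => w; rewrite admissibleT.
have half_quot : (n %/ (2 * r) = (n %/ r)./2)%N by rewrite mulnC divnMA divn2.
by rewrite all_blocks pairing_sumE half_quot; case: odd.
Qed.
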